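(* Let $A$ be an associative unital algebra over a field $k$ of characteristic zero and $\delta$ a locally nilpotent $k$-linear derivation of $A$ such that $\delta(x)=1$ for some $x\in A$. Then the following are equivalent: (a) $A^\delta$ is a left Ore domain; (b) $A$ is a left Ore domain; (c) $A$ is a critically compressible left $A[z;\delta]$-module.
   Context: $A^\delta=\ker\delta$. $\delta$ locally nilpotent means for every $a$ there is $n>0$ with $\delta^n(a)=0$. $A[z;\delta]$ is the differential operator ring ($A[z]$ as left $A$-module, $za=az+\delta(a)$), acting on $A$ by $(\sum_i a_iz^i)\cdot x=\sum_ia_i\delta^i(x)$. A left Ore domain is a domain $S$ with $Sa\cap Sb\neq0$ for nonzero $a,b$. A nonzero module is critically compressible if it embeds into each of its nonzero submodules and into none of its factor modules $M/N$ with $N\neq0$. *)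

From HB Require Import structures.
From mathcomp Require Import all_boot all_order all_algebra.
Set Implicit Arguments. Unset Strict Implicit. Unset Printing Implicit Defensive.
Import GRing.Theory.
Local Open Scope ring_scope.

Section Defs.
Variables (k : fieldType) (A : algType k).

(* d is a derivation: Leibniz rule (k-linearity is carried by the type) *)
Definition leibniz (d : A -> A) : Prop :=
  forall a b : A, d (a * b) = d a * b + a * d b.

Definition locally_nilpotent (d : A -> A) : Prop :=
  forall a : A, exists n : nat, (0 < n)%N /\ iter n d a = 0.

Definition kerd (d : A -> A) : A -> Prop := fun a => d a = 0.

(* The subring S (given as a subset of A containing 1, closed under ring
   operations) is a left Ore domain: nonzero ring without zero divisors
   such that S a ∩ S b <> 0 for nonzero a, b in S. *)
Definition left_ore_domain (S : A -> Prop) : Prop :=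
  [/\ (1 : A) != 0,
      (forall a b, S a -> S b -> a * b = 0 -> a = 0 \/ b = 0) &
      (forall a b, S a -> S b -> a != 0 -> b != 0 ->
         exists s t, [/\ S s, S t, s * a = t * b & s * a != 0])].

(* Elements of A[z;d] are written sum_i a_i z^i, represented by the
   coefficient list p = [:: a_0; a_1; ...]; their action on A is
   (sum_i a_i z^i) . x = sum_i a_i d^i(x). *)
Definition dop_act (d : A -> A) (p : seq A) (x : A) : A :=
  \sum_(i < size p) p`_i * iter i d x.

Definition is_submod (d : A -> A) (N : A -> Prop) : Prop :=
  [/\ N 0,
      (forall x y, N x -> N y -> N (x - y)) &
      (forall p x, N x -> N (dop_act d p x))].

Definition nonzero_set (N : A -> Prop) : Prop := exists y, N y /\ y != 0.

Definition dmod_hom (d : A -> A) (f : A -> A) : Prop :=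
  (forall x y, f (x + y) = f x + f y) /\
  (forall p x, f (dop_act d p x) = dop_act d p (f x)).

Definition embeds_into_sub (d : A -> A) (N : A -> Prop) : Prop :=
  exists f : A -> A, [/\ dmod_hom d f, injective f & forall x, N (f x)].

(* A map A -> A/N is represented by
   a lift f : A -> A (x |-> class of f x); it is a module homomorphism iff
   the defects below lie in N, and injective iff f x in N forces x = 0. *)
Definition embeds_into_factor (d : A -> A) (N : A -> Prop) : Prop :=
  exists f : A -> A,
    [/\ (forall x y, N (f (x + y) - (f x + f y))),
        (forall p x, N (f (dop_act d p x) - dop_act d p (f x))) &
        (forall x, N (f x) -> x = 0)].

Definition critically_compressible (d : A -> A) : Prop :=
  [/\ (1 : A) != 0,
      (forall N, is_submod d N -> nonzero_set N -> embeds_into_sub d N) &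
      (forall N, is_submod d N -> nonzero_set N -> ~ embeds_into_factor d N)].

End Defs.

From HB Require Import structures.
From mathcomp Require Import all_boot all_order all_algebra zify.
From Stdlib Require Import Classical.
Set Implicit Arguments. Unset Strict Implicit. Unset Printing Implicit Defensive.
Import GRing.Theory.
Local Open Scope ring_scope.

(* (b) => (a): if s a = t b <> 0 with a, b constants, apply d^p, where p is the
   d-degree of s; since nonzero constants are right regular, t has the same
   degree, and d^p s a = d^p t b <> 0 is an Ore relation with constant
   coefficients.
   (a) => (b): the top Leibniz coefficient d^(p+q) (a b) = C(p+q, p) d^p a d^q b
   is nonzero in characteristic 0, so A is a domain.  The Ore condition lifts by
   induction on degrees: an Ore relation u d^p a = v d^q b between constants
   (q <= p) cancels the leading term of a against a multiple of x^(p-q) b.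
   (b) => (c): A embeds into a nonzero submodule N via z |-> z c for a nonzero
   constant c in N; an embedding f of A into A/N is impossible because, by Ore,
   some s <> 0 has s f(1) in N, i.e. f(s) = 0 in A/N.
   (c) => (a): for a nonzero constant c, A c is isomorphic to A/ann(c), so
   compressibility forces ann(c) = 0; and if A a meets A b trivially, an
   embedding of A into A b is also an embedding into A/A a. *)

Section IterAdditive.
Variables (V : zmodType) (f : {additive V -> V}).

Lemma iter_raddf0 n : iter n f 0 = 0.
Proof. by elim: n => //= n ->; rewrite raddf0. Qed.

Lemma iter_raddfD n : {morph iter n f : a b / a + b}.
Proof. by move=> a b; elim: n => //= n ->; rewrite raddfD. Qed.

Lemma iter_raddfB n : {morph iter n f : a b / a - b}.
Proof. by move=> a b; elim: n => //= n ->; rewrite raddfB. Qed.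

Lemma iter_raddf_eq0_addn m n a : iter n f a = 0 -> iter (m + n) f a = 0.
Proof. by rewrite iterD => ->; rewrite iter_raddf0. Qed.

Lemma iter_raddf_top n a : a != 0 -> iter n f a = 0 ->
  exists p, iter p f a != 0 /\ iter p.+1 f a = 0.
Proof.
move=> a0; elim: n => [|n IHn] fna; first by rewrite -[a]/(iter 0 f a) fna eqxx in a0.
by case: (eqVneq (iter n f a) 0) => [/IHn|]; last exists n.
Qed.

Lemma iter_raddf_lt p n a : iter p f a != 0 -> iter n f a = 0 -> (p < n)%N.
Proof.
move=> fpa fna; rewrite ltnNge; apply: contra fpa => le_np.
by rewrite -(subnK le_np) iter_raddf_eq0_addn.
Qed.

End IterAdditive.

Section Derivation.
Variables (k : fieldType) (A : algType k) (d : {linear A -> A}).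
Hypothesis derd : leibniz d.

Lemma der1 : d 1 = 0.
Proof.
by apply: (addrI (d 1)); have := derd 1 1; rewrite !mulr1 !mul1r addr0 => <-.
Qed.

Lemma iter_der_mulr_ker n a c : d c = 0 -> iter n d (a * c) = iter n d a * c.
Proof. by move=> dc; elim: n => //= n ->; rewrite derd dc mulr0 addr0. Qed.

Lemma iter_der_mull_ker n a c : d c = 0 -> iter n d (c * a) = c * iter n d a.
Proof. by move=> dc; elim: n => //= n ->; rewrite derd dc mul0r add0r. Qed.

Lemma iter_der_mul_top {n p q : nat} {a b : A} : (p + q = n)%N ->
  iter p.+1 d a = 0 -> iter q.+1 d b = 0 ->
  iter n.+1 d (a * b) = 0 /\
  iter n d (a * b) = 'C(n, p)%:R *: (iter p d a * iter q d b).
Proof.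
elim: n p q a b => [|n IHn] [|p] [|q] a b // epq da db.
- have da0 : d a = 0 := da; have db0 : d b = 0 := db.
  by rewrite /= derd da0 db0 mul0r mulr0 addr0 scale1r.
- have da0 : d a = 0 := da; rewrite add0n in epq; rewrite -epq.
  by rewrite !iter_der_mull_ker // db mulr0 bin0 scale1r.
- have db0 : d b = 0 := db; rewrite addn0 in epq; rewrite -epq.
  by rewrite !iter_der_mulr_ker // da mul0r binn scale1r.
have e1 : (p + q.+1 = n)%N by move: epq; rewrite addSn => -[].
have e2 : (p.+1 + q = n)%N by rewrite addSn -addnS.
have [Z1 E1] := IHn p q.+1 (d a) b e1 (etrans (esym (iterSr _ _ _)) da) db.
have [Z2 E2] := IHn p.+1 q a (d b) e2 da (etrans (esym (iterSr _ _ _)) db).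
rewrite [iter n.+1 d _]iterSr [iter n.+2 d _]iterSr derd !iter_raddfD Z1 Z2 addr0.
split=> //.
by rewrite E1 E2 -(iterSr p) -(iterSr q) binS natrD scalerDl addrC.
Qed.

Lemma iter_der_exprn x j : d x = 1 ->
  iter j d (x ^+ j) = (j`!)%:R%:A /\ iter j.+1 d (x ^+ j) = 0.
Proof.
move=> dx; elim: j => [|j [Ej Zj]]; first by rewrite /= der1 scale1r.
have d2x : iter 2 d x = 0 by rewrite /= dx der1.
have [Z E] := iter_der_mul_top (addn1 j) Zj d2x.
by rewrite exprSr; split; rewrite // E Ej /= dx mulr1 scalerA -natrM binSn.
Qed.

Lemma dop_act_cons1 a z : dop_act d [:: a] z = a * z.
Proof. by rewrite /dop_act big_ord1. Qed.

Lemma dop_act_der z : dop_act d [:: 0; 1] z = d z.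
Proof. by rewrite /dop_act !big_ord_recr big_ord0 /= mul0r !add0r mul1r. Qed.

Lemma dop_act0 p : dop_act d p 0 = 0.
Proof. by rewrite /dop_act big1 // => i _; rewrite iter_raddf0 mulr0. Qed.

Lemma dop_act_mulr_ker p z c : d c = 0 -> dop_act d p (z * c) = dop_act d p z * c.
Proof.
move=> dc; rewrite /dop_act mulr_suml; apply: eq_bigr => i _.
by rewrite iter_der_mulr_ker // mulrA.
Qed.

Section Submodule.
Variable N : A -> Prop.
Hypothesis subN : is_submod d N.

Lemma submodD y z : N y -> N z -> N (y + z).
Proof.
case: subN => N0 NB _ Ny Nz.
by have := NB _ _ Ny (NB _ _ N0 Nz); rewrite sub0r opprK.
Qed.

Lemma submodMl a y : N y -> N (a * y).
Proof. by case: subN => _ _ Nact /(Nact [:: a]); rewrite dop_act_cons1. Qed.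

Lemma submod_iter_der n y : N y -> N (iter n d y).
Proof.
case: subN => _ _ Nact Ny; elim: n => //= n IHn.
by have := Nact [:: 0; 1] _ IHn; rewrite dop_act_der.
Qed.

End Submodule.

Lemma is_submod_mulr_ker c : d c = 0 -> is_submod d (fun z => exists w, z = w * c).
Proof.
move=> dc; split.
- by exists 0; rewrite mul0r.
- by move=> _ _ [w ->] [w' ->]; exists (w - w'); rewrite mulrBl.
- by move=> p _ [w ->]; exists (dop_act d p w); rewrite dop_act_mulr_ker.
Qed.

Lemma is_submod_ann c : d c = 0 -> is_submod d (fun z => z * c = 0).
Proof.
move=> dc; split; first by rewrite mul0r.
  by move=> z w; rewrite mulrBl => -> ->; rewrite subrr.
by move=> p z zc; rewrite -dop_act_mulr_ker // zc dop_act0.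
Qed.

Lemma dmod_hom0 f : dmod_hom d f -> f 0 = 0.
Proof. by case=> fD _; apply: (addrI (f 0)); rewrite -fD !addr0. Qed.

End Derivation.

Definition ker_right_regular {k : fieldType} {A : algType k} (d : A -> A) :=
  forall r c : A, d c = 0 -> c != 0 -> r * c = 0 -> r = 0.

Section LocallyNilpotent.
Variables (k : fieldType) (A : algType k) (d : {linear A -> A}).
Hypotheses (derd : leibniz d) (nild : locally_nilpotent d).

Lemma ore_ker_of_ore (a b s t : A) : ker_right_regular d ->
  d a = 0 -> d b = 0 -> a != 0 -> b != 0 -> s * a = t * b -> s * a != 0 ->
  exists s' t', [/\ kerd d s', kerd d t', s' * a = t' * b & s' * a != 0].
Proof.
move=> rreg da db a0 b0 sab sa0.
have s0 : s != 0 by apply: contraNneq sa0 => ->; rewrite mul0r.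
have [n [_ dns]] := nild s.
have [p [dps dp1s]] := iter_raddf_top s0 dns.
have iter_sab m : iter m d s * a = iter m d t * b.
  by rewrite -!iter_der_mulr_ker ?sab.
exists (iter p d s), (iter p d t); split => //.
- apply: (rreg _ b db b0).
  by change (iter p.+1 d t * b = 0); rewrite -iter_sab dp1s mul0r.
- by apply: contraNneq dps => /(rreg _ a da a0)/eqP.
Qed.

Hypothesis char0 : [pchar k] =i pred0.

Lemma natr_neq0 n : (0 < n)%N -> (n%:R : k) != 0.
Proof. by move=> n_gt0; rewrite (proj1 (pcharf0P _) char0) -lt0n. Qed.

Lemma domain_of_ker_domain :
  (forall a b, kerd d a -> kerd d b -> a * b = 0 -> a = 0 \/ b = 0) ->
  forall a b : A, a * b = 0 -> a = 0 \/ b = 0.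
Proof.
move=> domK a b ab0.
case: (eqVneq a 0) => [|a0]; first by left.
case: (eqVneq b 0) => [|b0]; first by right.
have [[na [_ dna]] [nb [_ dnb]]] := (nild a, nild b).
have [p [dpa dp1a]] := iter_raddf_top a0 dna.
have [q [dqb dq1b]] := iter_raddf_top b0 dnb.
have [_] := iter_der_mul_top derd erefl dp1a dq1b.
rewrite ab0 iter_raddf0 => /esym/eqP.
rewrite scaler_eq0 (negbTE (natr_neq0 _)) ?bin_gt0 ?leq_addr //= => /eqP.
by case/(domK _ _ dp1a dq1b) => /eqP; rewrite ?(negbTE dpa) ?(negbTE dqb).
Qed.

Variable x : A.
Hypothesis dx : d x = 1.

Lemma iter_der_cancel_top (a b u v : A) p q : (q <= p)%N ->
  iter q.+1 d b = 0 -> d u = 0 -> d v = 0 ->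
  u * iter p d a = v * iter q d b ->
  exists w, iter p d (u * a - w * b) = 0.
Proof.
move=> le_qp dq1b du dv uv.
set j := (p - q)%N; have jq : (j + q = p)%N by rewrite subnK.
set c : k := ('C(p, j) * j`!)%:R.
have c0 : c != 0 by rewrite natr_neq0 // muln_gt0 bin_gt0 -jq leq_addr fact_gt0.
have [Ej Zj] := iter_der_exprn derd j dx.
have [_ Ejb] := iter_der_mul_top derd jq Zj dq1b.
exists (c^-1 *: v * x ^+ j).
have dcv : d (c^-1 *: v) = 0 by rewrite linearZ /= dv scaler0.
rewrite -mulrA iter_raddfB (iter_der_mull_ker derd _ _ du).
rewrite (iter_der_mull_ker derd _ _ dcv) Ejb Ej mulr_algl scalerA.
by rewrite -natrM -/c -scalerAr -scalerAl scalerA mulfV // scale1r uv subrr.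
Qed.

Section OreLift.
Hypothesis domA : forall a b : A, a * b = 0 -> a = 0 \/ b = 0.
Hypothesis oreK : forall a b, kerd d a -> kerd d b -> a != 0 -> b != 0 ->
  exists s t, [/\ kerd d s, kerd d t, s * a = t * b & s * a != 0].

Lemma mul_neq0 (a b : A) : a != 0 -> b != 0 -> a * b != 0.
Proof. by move=> a0 b0; apply/eqP => /domA[]; apply/eqP. Qed.

Lemma ore_of_ker_ore_bounded N (a b : A) n1 n2 : (n1 + n2 <= N)%N ->
  a != 0 -> b != 0 -> iter n1 d a = 0 -> iter n2 d b = 0 ->
  exists s t, s * a = t * b /\ s * a != 0.
Proof.
elim: N a b n1 n2 => [|N IHN] a b n1 n2 le_n12 a0 b0 dn1a dn2b.
  move: le_n12 dn1a; rewrite leqn0 addn_eq0 => /andP[/eqP-> _] /= a_eq0.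
  by rewrite a_eq0 eqxx in a0.
have [p [dpa dp1a]] := iter_raddf_top a0 dn1a.
have [q [dqb dq1b]] := iter_raddf_top b0 dn2b.
have [lt_pn1 lt_qn2] := (iter_raddf_lt dpa dn1a, iter_raddf_lt dqb dn2b).
wlog le_qp : a b n1 n2 p q le_n12 a0 b0 dn1a dn2b dpa dp1a dqb dq1b lt_pn1 lt_qn2
  / (q <= p)%N.
  move=> sym; case: (leqP q p) => [le_qp|/ltnW le_pq].
    by apply: (sym a b n1 n2 p q).
  have [s [t [sab sa0]]] : exists s t, s * b = t * a /\ s * b != 0.
    by apply: (sym b a n2 n1 q p); rewrite // addnC.
  by exists t, s; rewrite -sab.
have [u [v [du dv uv uv0]]] := oreK dp1a dq1b dpa dqb.
have u0 : u != 0 by apply: contraNneq uv0 => ->; rewrite mul0r.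
have [w dpa'] := iter_der_cancel_top le_qp dq1b du dv uv.
set a' := u * a - w * b in dpa'.
have ua : u * a = a' + w * b by rewrite subrK.
case: (eqVneq a' 0) => [a'0|a'0].
  by exists u, w; split; [rewrite ua a'0 add0r | exact: mul_neq0].
have [s [t [sa'b sa'0]]] : exists s t, s * a' = t * b /\ s * a' != 0.
  by apply: (IHN a' b p n2) => //; lia.
have s0 : s != 0 by apply: contraNneq sa'0 => ->; rewrite mul0r.
exists (s * u), (t + s * w); split; last by rewrite -mulrA !mul_neq0.
by rewrite -mulrA ua mulrDr sa'b mulrDl mulrA.
Qed.

End OreLift.

Lemma ore_domain_of_ker_ore_domain :
  left_ore_domain (kerd d) -> left_ore_domain (fun _ : A => True).
Proof.
move=> [one domK oreK]; have domA := domain_of_ker_domain domK.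
split=> // [a b _ _ /domA // | a b _ _ a0 b0].
have [[n1 [_ dn1a]] [n2 [_ dn2b]]] := (nild a, nild b).
have [s [t [sab sa0]]] := ore_of_ker_ore_bounded domA oreK (leqnn _) a0 b0 dn1a dn2b.
by exists s, t.
Qed.

Lemma ker_ore_domain_of_ore_domain :
  left_ore_domain (fun _ : A => True) -> left_ore_domain (kerd d).
Proof.
move=> [one domA oreA]; split=> // [a b _ _ | a b da db a0 b0]; first exact: domA.
have rreg : ker_right_regular d.
  by move=> r c _ c0 /(domA _ _ I I) [// | c_eq0]; rewrite c_eq0 eqxx in c0.
have [s [t [_ _ sab sa0]]] := oreA a b I I a0 b0.
exact: ore_ker_of_ore rreg da db a0 b0 sab sa0.
Qed.

Lemma embeds_into_sub_of_domain N :
  (forall a b : A, a * b = 0 -> a = 0 \/ b = 0) ->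
  is_submod d N -> nonzero_set N -> embeds_into_sub d N.
Proof.
move=> domA subN [y [Ny y0]].
have [n [_ dny]] := nild y; have [m [dmy dm1y]] := iter_raddf_top y0 dny.
exists (fun z => z * iter m d y); split.
- by split=> [z w | p z]; rewrite ?mulrDl ?dop_act_mulr_ker.
- move=> z w zw; apply/eqP; rewrite -subr_eq0; apply/eqP.
  have /domA[// | my0] : (z - w) * iter m d y = 0 by rewrite mulrBl zw subrr.
  by rewrite my0 eqxx in dmy.
- by move=> z; apply/(submodMl subN)/(submod_iter_der subN).
Qed.

Lemma not_embeds_into_factor_of_ore_domain N :
  left_ore_domain (fun _ : A => True) ->
  is_submod d N -> nonzero_set N -> ~ embeds_into_factor d N.
Proof.
move=> [one _ oreA] subN [y [Ny y0]] [f [_ fact finj]].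
have [s [s0 Nsf1]] : exists s, s != 0 /\ N (s * f 1).
  case: (eqVneq (f 1) 0) => [-> | f10].
    by exists 1; rewrite mulr0; case: subN.
  have [s [t [_ _ st sf0]]] := oreA _ _ I I f10 y0.
  exists s; split; first by apply: contraNneq sf0 => ->; rewrite mul0r.
  by rewrite st; apply: (submodMl subN).
apply: (negP s0); apply/eqP; apply: finj.
have := fact [:: s] 1; rewrite !dop_act_cons1 mulr1 => Nfs.
by have := submodD subN Nfs Nsf1; rewrite subrK.
Qed.

Lemma critically_compressible_of_ore_domain :
  left_ore_domain (fun _ : A => True) -> critically_compressible d.
Proof.
move=> oreA; have [one domA _] := oreA; split=> // N subN N0.
  exact: embeds_into_sub_of_domain (fun a b => domA a b I I) subN N0.
exact: not_embeds_into_factor_of_ore_domain oreA subN N0.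
Qed.

Lemma nonzero_set_mulr (c : A) : c != 0 -> nonzero_set (fun z => exists w, z = w * c).
Proof. by move=> c0; exists c; split=> //; exists 1; rewrite mul1r. Qed.

Lemma embeds_into_factor_ann c : d c = 0 ->
  embeds_into_sub d (fun z => exists w, z = w * c) ->
  embeds_into_factor d (fun z => z * c = 0).
Proof.
move=> dc [g [[gD gact] ginj gN]].
have gN' z : exists w, g z == w * c by have [w ->] := gN z; exists w.
pose h z := xchoose (gN' z).
have gh z : g z = h z * c by apply/eqP/(xchooseP (gN' z)).
exists h; split.
- by move=> z w; rewrite mulrBl mulrDl -!gh gD subrr.
- by move=> p z; rewrite mulrBl -dop_act_mulr_ker // -!gh gact subrr.
- by move=> z hz; apply: ginj; rewrite gh hz (dmod_hom0 (conj gD gact)).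
Qed.

Lemma embeds_into_factor_of_disjoint N L : is_submod d L ->
  embeds_into_sub d N -> (forall y, N y -> L y -> y = 0) ->
  embeds_into_factor d L.
Proof.
move=> [L0 _ _] [g [[gD gact] ginj gN]] NL.
exists g; split=> [z w | p z | z Lgz]; rewrite ?gD ?gact ?subrr //.
by apply: ginj; rewrite (NL _ (gN z) Lgz) (dmod_hom0 (conj gD gact)).
Qed.

Lemma ker_right_regular_of_critically_compressible :
  critically_compressible d -> ker_right_regular d.
Proof.
move=> [_ comp crit] r c dc c0 rc; case: (eqVneq r 0) => // r0; exfalso.
apply: (crit _ (is_submod_ann derd dc)); first by exists r.
have embAc := comp _ (is_submod_mulr_ker derd dc) (nonzero_set_mulr c0).
exact: embeds_into_factor_ann embAc.
Qed.

Lemma ker_ore_domain_of_critically_compressible :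
  critically_compressible d -> left_ore_domain (kerd d).
Proof.
move=> cc; have rreg := ker_right_regular_of_critically_compressible cc.
case: cc => one comp crit; split=> // [a b _ db ab0 | a b da db a0 b0].
  by case: (eqVneq b 0) => [-> | b0]; [right | left; exact: rreg ab0].
have [s [t [sab sa0]]] : exists s t, s * a = t * b /\ s * a != 0.
  apply: NNPP => no_ore.
  apply: (crit _ (is_submod_mulr_ker derd da) (nonzero_set_mulr a0)).
  have embN := comp _ (is_submod_mulr_ker derd db) (nonzero_set_mulr b0).
  apply: (embeds_into_factor_of_disjoint (is_submod_mulr_ker derd da) embN).
  move=> _ [t ->] [s tbsa]; case: (eqVneq (t * b) 0) => // tb0; exfalso.
  by apply: no_ore; exists s, t; rewrite -tbsa.
exact: ore_ker_of_ore rreg da db a0 b0 sab sa0.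
Qed.

End LocallyNilpotent.

Theorem proposition3p12 (k : fieldType) (A : algType k) (d : {linear A -> A}) :
  [pchar k] =i pred0 ->
  leibniz d ->
  locally_nilpotent d ->
  (exists x : A, d x = 1) ->
  (left_ore_domain (kerd d) <-> left_ore_domain (fun _ : A => True)) /\
  (left_ore_domain (fun _ : A => True) <-> critically_compressible d).
Proof.
move=> char0 derd nild [x dx].
have a_b := ore_domain_of_ker_ore_domain derd nild char0 dx.
have b_a := ker_ore_domain_of_ore_domain derd nild.
have b_c := critically_compressible_of_ore_domain derd nild.
have c_a := ker_ore_domain_of_critically_compressible derd nild.
by split; split=> // /c_a /a_b.
Qed.
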